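(* Let $L>0$ be fixed, $c_{cr}=4/L^2$, and let the constant renormalized force be $F=cN$ with $c>c_{cr}$. Then for all sufficiently large $N$ the fixed point satisfies $x_N>-L$, and $x_N\to-\frac{2}{\sqrt c}$ as $N\to\infty$. The density $\rho$ of the fixed points exists, vanishes on $[-L,-\frac2{\sqrt c})$, and is not constant on $(-\frac2{\sqrt c},0)$.
   Context: A configuration consists of $N+1$ point particles $-L\le x_N<\dots<x_1<x_0\le 0$ on $[-L,0]$ with potential energy $U=\sum_{i=1}^{N}\frac{\alpha_{int}}{x_{i-1}-x_i}-\sum_{i=0}^{N}\int_{-L}^{x_i}\alpha_{ext}F_0\,dx$, $\alpha_{int},\alpha_{ext}>0$, with constant $F_0>0$; the renormalized force is the constant $F=\frac{\alpha_{ext}}{\alpha_{int}}F_0$, which may depend on $N$ (the external force pushes particles towards $0$). Write $\delta_k=x_{k-1}-x_k$, $f_k=\delta_k^{-2}$. The walls at $0,-L$ are completely inelastic. A fixed point is a configuration with $x_0=0$, $f_{k+1}+F=f_k$ for $k=1,\dots,N-1$, and either $x_N=-L$ with $f_N\ge F$, or $x_N>-L$ with $f_N=F$; it exists and is unique. The density $\rho$ of the fixed points (as $N\to\infty$) is a function on $[-L,0]$ such that for every subinterval $I\subset[-L,0]$, $\int_I\rho(x)\,dx=\lim_{N\to\infty}\frac{\#\{i:x_i\in I\}}{N}$. *)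

From Stdlib Require Import Reals Lra Lia.
Open Scope R_scope.

(* A configuration of N+1 particles is x : nat -> R; only x 0, ..., x N matter. *)

Definition delta (x : nat -> R) (k : nat) : R := x (Nat.pred k) - x k.

Definition fk (x : nat -> R) (k : nat) : R := / (delta x k ^ 2).

Definition admissible (N : nat) (L : R) (x : nat -> R) : Prop :=
  -L <= x N /\ x 0%nat <= 0 /\ (forall i : nat, (i < N)%nat -> x (S i) < x i).

Definition is_fixed_point (N : nat) (L F : R) (x : nat -> R) : Prop :=
  admissible N L x /\
  x 0%nat = 0 /\
  (forall k : nat, (1 <= k)%nat -> (k <= N - 1)%nat -> fk x (S k) + F = fk x k) /\
  ((x N = -L /\ fk x N >= F) \/ (x N > -L /\ fk x N = F)).

(* Membership in an interval with endpoints a <= b; la / rb say whether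
   the left / right endpoint is included. *)
Definition in_interval (a b : R) (la rb : bool) (y : R) : bool :=
  (if la then (if Rle_dec a y then true else false)
         else (if Rlt_dec a y then true else false)) &&
  (if rb then (if Rle_dec y b then true else false)
         else (if Rlt_dec y b then true else false)).

Definition count_in (N : nat) (x : nat -> R) (a b : R) (la rb : bool) : R :=
  sum_f_R0 (fun i => if in_interval a b la rb (x i) then 1 else 0) N.

(* rho is a density of the family of configurations xs (xs N has N+1 particles):
   for every nondegenerate subinterval I of [-L,0] (open, closed or half-open),
   rho is Riemann integrable on I and its integral equals
   lim_{N -> oo} #{i : x_i in I} / N. *)
Definition is_density (L : R) (xs : nat -> nat -> R) (rho : R -> R) : Prop :=
  forall a b : R, -L <= a -> a < b -> b <= 0 ->
    exists pr : Riemann_integrable rho a b,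
      forall la rb : bool,
        Un_cv (fun N => count_in N (xs N) a b la rb / INR N) (RiemannInt pr).

From Stdlib Require Import Reals Lra Lia.
From Coquelicot Require Import Coquelicot.
Open Scope R_scope.

(* Along a fixed point the recursion gives f_k = f_N + (N - k) F with f_N >= F, so the gap
   delta_(i+1) = f_(i+1)^(-1/2) is at most (F (N - i))^(-1/2), with equality when f_N = F.
   Comparing these gaps with 2 (sqrt m - sqrt (m - 1)) gives sqrt F * |x_i| <= 2 (sqrt N - sqrt (N - i));
   for F = c N the whole configuration thus fits in [-2/sqrt c, 0], which is strictly inside
   [-L, 0] when c L^2 > 4.  Hence the wall is never reached, f_N = F, and the same comparison
   from below pins down (1 + x_i sqrt c / 2) sqrt N = sqrt (N - i) + O(1).  So the fraction of
   particles in [t, 0] tends to 1 - (1 + t sqrt c / 2)_+^2, whose negative derivative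
   sqrt c (1 + t sqrt c / 2)_+ is the density: zero left of -2/sqrt c, strictly increasing right of it. *)

Definition count (N : nat) (g : nat -> bool) : R :=
  sum_f_R0 (fun i => if g i then 1 else 0) N.

Lemma count_ge0 N g : 0 <= count N g.
Proof. unfold count; induction N; simpl; destruct (g _); lra. Qed.

Lemma count_le N g : forall p q,
  (forall i, (i <= N)%nat -> g i = true -> p <= INR i <= q) ->
  count N g <= Rmax 0 (q - p + 1).
Proof.
  unfold count; induction N as [|N IH]; intros p q Hg; simpl sum_f_R0.
  - destruct (g 0%nat) eqn:E; [specialize (Hg 0%nat (le_n _) E); simpl in Hg|];
      unfold Rmax; destruct (Rle_dec _ _); lra.
  - destruct (g (S N)) eqn:E.
    + assert (HS := Hg (S N) (le_n _) E). rewrite S_INR in HS.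
      assert (IHN : sum_f_R0 (fun i => if g i then 1 else 0) N <= Rmax 0 (INR N - p + 1)).
      { apply IH. intros i Hi Gi. assert (Hs := Hg i ltac:(lia) Gi).
        apply le_INR in Hi. lra. }
      revert IHN; unfold Rmax; repeat destruct (Rle_dec _ _); lra.
    + rewrite Rplus_0_r. apply IH. intros i Hi Gi. apply Hg; auto.
Qed.

Lemma count_ge N g : forall p q, 0 <= p ->
  (forall i, (i <= N)%nat -> p < INR i < q -> g i = true) ->
  Rmin (q - 1) (INR N) - p <= count N g.
Proof.
  induction N as [|N IH]; intros p q Hp Hg.
  - unfold count; simpl; destruct (g 0%nat); unfold Rmin; destruct (Rle_dec _ _); lra.
  - assert (IHN := IH p q Hp ltac:(intros i Hi Hi'; apply Hg; auto)).
    assert (H0 := count_ge0 N g).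
    unfold count in *; simpl sum_f_R0. rewrite S_INR.
    destruct (g (S N)) eqn:E.
    + revert IHN; unfold Rmin; repeat destruct (Rle_dec _ _); lra.
    + rewrite Rplus_0_r.
      destruct (Rlt_dec p (INR (S N))) as [h1|h1]; [destruct (Rlt_dec (INR (S N)) q) as [h2|h2]|].
      * rewrite (Hg (S N) (le_n _) (conj h1 h2)) in E; discriminate.
      * revert IHN h1 h2; rewrite S_INR; unfold Rmin; repeat destruct (Rle_dec _ _); lra.
      * revert IHN h1; rewrite S_INR; unfold Rmin; repeat destruct (Rle_dec _ _); lra.
Qed.

Lemma in_interval_le a b la rb y : in_interval a b la rb y = true -> a <= y <= b.
Proof.
  unfold in_interval; destruct la, rb;
    repeat destruct (Rle_dec _ _); repeat destruct (Rlt_dec _ _); simpl; try discriminate; lra.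
Qed.

Lemma in_interval_lt a b la rb y : a < y < b -> in_interval a b la rb y = true.
Proof.
  unfold in_interval; destruct la, rb;
    repeat destruct (Rle_dec _ _); repeat destruct (Rlt_dec _ _); simpl; auto; lra.
Qed.

Lemma sqrt_step_upper m : 1 <= m -> / sqrt m <= 2 * (sqrt m - sqrt (m - 1)).
Proof.
  intros Hm.
  assert (ha := sqrt_lt_R0 m ltac:(lra)). assert (ha2 := sqrt_sqrt m ltac:(lra)).
  assert (hb := sqrt_pos (m - 1)). assert (hb2 := sqrt_sqrt (m - 1) ltac:(lra)).
  apply Rmult_le_reg_l with (sqrt m); auto.
  rewrite Rinv_r by lra. nra.
Qed.

Lemma sqrt_step_lower m : 0 < m -> 2 * (sqrt (m + 1) - sqrt m) <= / sqrt m.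
Proof.
  intros Hm.
  assert (ha := sqrt_lt_R0 m Hm). assert (ha2 := sqrt_sqrt m ltac:(lra)).
  assert (hb := sqrt_pos (m + 1)). assert (hb2 := sqrt_sqrt (m + 1) ltac:(lra)).
  apply Rmult_le_reg_l with (sqrt m); auto.
  rewrite Rinv_r by lra. nra.
Qed.

Lemma sqrt_succ_le m : 0 <= m -> sqrt (m + 1) <= sqrt m + 1.
Proof.
  intros Hm. assert (h := sqrt_pos m). assert (h2 := sqrt_sqrt m Hm).
  rewrite <- (sqrt_pow2 (sqrt m + 1)) by lra. apply sqrt_le_1_alt. nra.
Qed.

Section Telescoping.
Variables (N : nat) (K : R) (x : nat -> R).
Hypothesis x0 : x 0%nat = 0.

Lemma telescope_upper :
  (forall i, (i < N)%nat -> K * (x i - x (S i)) <= / sqrt (INR N - INR i)) ->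
  forall i, (i <= N)%nat -> K * - x i <= 2 * (sqrt (INR N) - sqrt (INR N - INR i)).
Proof.
  intros Hgap. induction i as [|i IH]; intros Hi.
  - rewrite x0. simpl INR. rewrite Rminus_0_r. lra.
  - assert (Hm : 1 <= INR N - INR i) by (apply le_INR in Hi; rewrite S_INR in Hi; lra).
    assert (Hs := sqrt_step_upper _ Hm). assert (Hg := Hgap i Hi).
    specialize (IH ltac:(lia)). rewrite S_INR.
    replace (INR N - (INR i + 1)) with (INR N - INR i - 1) by ring. nra.
Qed.

Lemma telescope_lower :
  (forall i, (i < N)%nat -> / sqrt (INR N - INR i) <= K * (x i - x (S i))) ->
  forall i, (i <= N)%nat -> 2 * (sqrt (INR N + 1) - sqrt (INR N + 1 - INR i)) <= K * - x i.
Proof.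
  intros Hgap. induction i as [|i IH]; intros Hi.
  - rewrite x0. simpl INR. rewrite Rminus_0_r. lra.
  - assert (Hm : 0 < INR N - INR i) by (apply lt_INR in Hi; lra).
    assert (Hs := sqrt_step_lower _ Hm). assert (Hg := Hgap i Hi).
    specialize (IH ltac:(lia)). rewrite S_INR.
    replace (INR N + 1 - (INR i + 1)) with (INR N - INR i) by ring.
    replace (INR N + 1 - INR i) with (INR N - INR i + 1) in IH by ring. nra.
Qed.

End Telescoping.

Lemma delta_inv_sqrt_fk x k : 0 < delta x k -> delta x k = / sqrt (fk x k).
Proof. intros h. unfold fk. rewrite sqrt_inv, sqrt_pow2, Rinv_inv; lra. Qed.

Section FixedPoint.
Variables (N : nat) (L F : R) (x : nat -> R).
Hypotheses (F_pos : 0 < F) (fp : is_fixed_point N L F x).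

Lemma fixed_point_fk k : (1 <= k <= N)%nat -> fk x k = fk x N + (INR N - INR k) * F.
Proof.
  destruct fp as [_ [_ [rec _]]]. intros [k1 kN].
  remember (N - k)%nat as m eqn:Hm. revert k k1 kN Hm.
  induction m as [|m IH]; intros k k1 kN Hm.
  - replace k with N by lia. ring.
  - rewrite <- (rec k k1 ltac:(lia)), (IH (S k)) by lia. rewrite S_INR. ring.
Qed.

Lemma fixed_point_fk_last : F <= fk x N.
Proof. destruct fp as [_ [_ [_ [[_ h] | [_ h]]]]]; lra. Qed.

Lemma fixed_point_gap i : (i < N)%nat ->
  x i - x (S i) = / sqrt (fk x N - F + F * (INR N - INR i)).
Proof.
  intros Hi. destruct fp as [[_ [_ incr]] _].
  assert (E : fk x N - F + F * (INR N - INR i) = fk x (S i)).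
  { rewrite (fixed_point_fk (S i)) by lia. rewrite S_INR. ring. }
  rewrite E. apply (delta_inv_sqrt_fk x (S i)). specialize (incr i Hi). unfold delta; simpl; lra.
Qed.

Lemma fixed_point_gap_le i : (i < N)%nat ->
  sqrt F * (x i - x (S i)) <= / sqrt (INR N - INR i).
Proof.
  intros Hi. rewrite fixed_point_gap by auto.
  assert (Hm : 0 < INR N - INR i) by (apply lt_INR in Hi; lra).
  assert (hF := sqrt_lt_R0 F F_pos). assert (hm := sqrt_lt_R0 _ Hm).
  assert (Hf := fixed_point_fk_last).
  apply Rmult_le_reg_l with (/ sqrt F); [apply Rinv_0_lt_compat; lra|].
  rewrite <- Rmult_assoc, Rinv_l, Rmult_1_l by lra. rewrite <- Rinv_mult, <- sqrt_mult by lra.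
  apply Rinv_le_contravar; [apply sqrt_lt_R0; nra|]. apply sqrt_le_1_alt. nra.
Qed.

Lemma fixed_point_gap_eq i : fk x N = F -> (i < N)%nat ->
  sqrt F * (x i - x (S i)) = / sqrt (INR N - INR i).
Proof.
  intros HfN Hi. rewrite fixed_point_gap, HfN by auto.
  assert (Hm : 0 < INR N - INR i) by (apply lt_INR in Hi; lra).
  assert (hF := sqrt_lt_R0 F F_pos). assert (hm := sqrt_lt_R0 _ Hm).
  replace (F - F + F * (INR N - INR i)) with (F * (INR N - INR i)) by ring.
  rewrite sqrt_mult by lra. field. lra.
Qed.

Lemma fixed_point_position_upper i : (i <= N)%nat ->
  sqrt F * - x i <= 2 * (sqrt (INR N) - sqrt (INR N - INR i)).
Proof.
  destruct fp as [_ [x0 _]]. apply telescope_upper; auto. exact fixed_point_gap_le.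
Qed.

Lemma fixed_point_position_lower i : fk x N = F -> (i <= N)%nat ->
  2 * (sqrt (INR N + 1) - sqrt (INR N + 1 - INR i)) <= sqrt F * - x i.
Proof.
  intros HfN. destruct fp as [_ [x0 _]]. apply telescope_lower; auto.
  intros j Hj. rewrite fixed_point_gap_eq; auto. lra.
Qed.

Lemma fixed_point_free : 2 * sqrt (INR N) < sqrt F * L -> - L < x N /\ fk x N = F.
Proof.
  intros HL. assert (hF := sqrt_lt_R0 F F_pos).
  assert (Hx := fixed_point_position_upper N (le_n _)).
  rewrite Rminus_diag, sqrt_0 in Hx.
  assert (HxN : - L < x N) by nra.
  destruct fp as [_ [_ [_ [[h _] | [_ h]]]]]; [lra | auto].
Qed.

End FixedPoint.

Lemma RiemannInt_const_on (f : R -> R) C a b (pr : Riemann_integrable f a b) : a <= b ->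
  (forall y, a <= y <= b -> f y = C) -> RiemannInt pr = C * (b - a).
Proof.
  intros Hab H. rewrite <- RInt_Reals, (RInt_ext f (fun _ => C)).
  - rewrite RInt_const. change (scal ?x ?y) with (x * y). ring.
  - intros y [h1 h2]. rewrite Rmin_left in h1 by lra. rewrite Rmax_right in h2 by lra.
    apply H; lra.
Qed.

Lemma Un_cv_inv_sqrt_rate (u : nat -> R) (l M : R) :
  (forall n, (1 <= n)%nat -> Rabs (u n - l) <= M / sqrt (INR n)) -> Un_cv u l.
Proof.
  intros Hu eps He. set (k := Rabs M / eps).
  assert (hk : 0 <= k) by (apply Rmult_le_pos; [apply Rabs_pos | left; apply Rinv_0_lt_compat; lra]).
  destruct (INR_unbounded (k ^ 2)) as [N0 HN0].
  exists (S N0). intros n Hn. unfold R_dist.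
  assert (HN : INR N0 <= INR n) by (apply le_INR; lia).
  assert (hsn : k < sqrt (INR n)).
  { rewrite <- (sqrt_pow2 k) by auto. apply sqrt_lt_1_alt. split; [nra | lra]. }
  eapply Rle_lt_trans; [apply Hu; lia|].
  assert (hs : 0 < sqrt (INR n)) by lra.
  apply Rmult_lt_reg_r with (sqrt (INR n)); auto.
  unfold Rdiv. rewrite Rmult_assoc, Rinv_l, Rmult_1_r by lra.
  assert (Rabs M = k * eps) by (unfold k; field; lra).
  assert (h := Rle_abs M). nra.
Qed.

Section Profile.
Variable c : R.
Hypothesis c_pos : 0 < c.

Definition edge_dist (t : R) : R := 1 + t * sqrt c / 2.
(* [tail_mass t] is the limiting fraction of particles in [[t, 0]]. *)
Definition tail_mass (t : R) : R := 1 - Rmax 0 (edge_dist t) ^ 2.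
Definition limit_density (t : R) : R := sqrt c * Rmax 0 (edge_dist t).

Lemma edge_dist_le t1 t2 : t1 <= t2 -> edge_dist t1 <= edge_dist t2.
Proof. intros H. assert (hc := sqrt_lt_R0 c c_pos). unfold edge_dist. nra. Qed.

Lemma edge_dist_zero : edge_dist (- (2 / sqrt c)) = 0.
Proof. assert (h := sqrt_lt_R0 c c_pos). unfold edge_dist. field. lra. Qed.

Lemma tail_mass_bulk t : 0 <= edge_dist t -> tail_mass t = 1 - edge_dist t ^ 2.
Proof. intros H. unfold tail_mass. now rewrite Rmax_right. Qed.

Lemma tail_mass_void t : edge_dist t <= 0 -> tail_mass t = 1.
Proof. intros H. unfold tail_mass. rewrite Rmax_left; auto; ring. Qed.

Lemma tail_mass_antitone t1 t2 : t1 <= t2 -> tail_mass t2 <= tail_mass t1.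
Proof.
  intros H. assert (h := edge_dist_le t1 t2 H). unfold tail_mass, Rmax.
  repeat destruct (Rle_dec _ _); nra.
Qed.

Lemma tail_mass_bounds t : t <= 0 -> 0 <= tail_mass t <= 1.
Proof.
  intros H. assert (h := edge_dist_le t 0 H).
  unfold edge_dist in h at 2. rewrite Rmult_0_l in h.
  unfold tail_mass, Rmax. destruct (Rle_dec _ _); nra.
Qed.

Lemma is_RInt_limit_density_bulk a b : 0 <= edge_dist a -> a <= b ->
  is_RInt limit_density a b (tail_mass a - tail_mass b).
Proof.
  intros Ha Hab. assert (Hb := edge_dist_le a b Hab).
  rewrite (tail_mass_bulk a), (tail_mass_bulk b) by lra.
  replace (1 - edge_dist a ^ 2 - (1 - edge_dist b ^ 2))
    with (minus (edge_dist b ^ 2) (edge_dist a ^ 2)) by (unfold minus, plus, opp; simpl; ring).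
  apply (is_RInt_ext (fun t => sqrt c * edge_dist t)).
  - intros t [h1 h2]. rewrite Rmin_left in h1 by lra. rewrite Rmax_right in h2 by lra.
    unfold limit_density. rewrite Rmax_right; auto.
    apply Rle_trans with (edge_dist a); [auto | apply edge_dist_le; lra].
  - unfold edge_dist. apply (is_RInt_derive (fun t => (1 + t * sqrt c / 2) ^ 2)).
    + intros t _. auto_derive; [auto | field].
    + intros t _. apply (@ex_derive_continuous R_AbsRing R_NormedModule). auto_derive. auto.
Qed.

Lemma is_RInt_limit_density_void a b : edge_dist b <= 0 -> a <= b ->
  is_RInt limit_density a b (tail_mass a - tail_mass b).
Proof.
  intros Hb Hab. assert (Ha := edge_dist_le a b Hab).
  rewrite (tail_mass_void a), (tail_mass_void b) by lra.
  assert (h := is_RInt_const a b 0).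
  replace (1 - 1) with (scal (b - a) 0) by (unfold scal; simpl; unfold mult; simpl; ring).
  apply (is_RInt_ext (fun _ => 0)); [|exact h].
  intros t [h1 h2]. rewrite Rmin_left in h1 by lra. rewrite Rmax_right in h2 by lra.
  unfold limit_density. rewrite Rmax_left; [symmetry; apply Rmult_0_r|].
  apply Rle_trans with (edge_dist b); [apply edge_dist_le; lra | auto].
Qed.

Lemma is_RInt_limit_density a b : a <= b ->
  is_RInt limit_density a b (tail_mass a - tail_mass b).
Proof.
  intros Hab. set (e := - (2 / sqrt c)).
  assert (Ee : edge_dist e = 0) by exact edge_dist_zero.
  destruct (Rle_dec a e) as [Hae|Hae]; [destruct (Rle_dec b e) as [Hbe|Hbe]|].
  - apply is_RInt_limit_density_void; auto. rewrite <- Ee. apply edge_dist_le; auto.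
  - assert (left_part : is_RInt limit_density a e (tail_mass a - tail_mass e))
      by (apply is_RInt_limit_density_void; auto; rewrite Ee; lra).
    assert (right_part : is_RInt limit_density e b (tail_mass e - tail_mass b))
      by (apply is_RInt_limit_density_bulk; [rewrite Ee|]; lra).
    assert (h := is_RInt_Chasles _ _ _ _ _ _ left_part right_part).
    replace (tail_mass a - tail_mass b)
      with (plus (tail_mass a - tail_mass e) (tail_mass e - tail_mass b))
      by (unfold plus; simpl; ring).
    exact h.
  - apply is_RInt_limit_density_bulk; auto. rewrite <- Ee.
    apply edge_dist_le; auto; lra.
Qed.

Lemma RiemannInt_limit_density a b : a <= b ->
  exists pr : Riemann_integrable limit_density a b,
    RiemannInt pr = tail_mass a - tail_mass b.
Proof.
  intros Hab. assert (h := is_RInt_limit_density a b Hab).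
  exists (ex_RInt_Reals_0 _ _ _ (ex_intro _ _ h)).
  rewrite <- RInt_Reals. apply is_RInt_unique; auto.
Qed.

Section FixedPointProfile.
Variables (N : nat) (L : R) (x : nat -> R).
Hypotheses (N_pos : (1 <= N)%nat) (edge_in_box : 2 < sqrt c * L)
  (fp : is_fixed_point N L (c * INR N) x).

Lemma fixed_point_cN_free : - L < x N /\ fk x N = c * INR N.
Proof.
  assert (HN : 1 <= INR N) by (apply (le_INR 1); lia).
  apply (fixed_point_free N L) with (F := c * INR N); auto; [nra|].
  rewrite sqrt_mult by lra. assert (h := sqrt_lt_R0 (INR N) ltac:(lra)). nra.
Qed.

Lemma fixed_point_profile i : (i <= N)%nat ->
  sqrt (INR N - INR i) <= edge_dist (x i) * sqrt (INR N) <= sqrt (INR N - INR i) + 1.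
Proof.
  intros Hi. assert (HN : 1 <= INR N) by (apply (le_INR 1); lia).
  assert (Hii : INR i <= INR N) by (apply le_INR; lia).
  assert (HF : 0 < c * INR N) by nra.
  assert (Up := fixed_point_position_upper N L _ x HF fp i Hi).
  assert (Lo := fixed_point_position_lower N L _ x HF fp i (proj2 fixed_point_cN_free) Hi).
  assert (E : edge_dist (x i) * sqrt (INR N) = sqrt (INR N) - sqrt (c * INR N) * - x i / 2)
    by (unfold edge_dist; rewrite sqrt_mult by lra; field).
  assert (Hs1 : sqrt (INR N) <= sqrt (INR N + 1)) by (apply sqrt_le_1_alt; lra).
  assert (Hs2 := sqrt_succ_le (INR N - INR i) ltac:(lra)).
  replace (INR N - INR i + 1) with (INR N + 1 - INR i) in Hs2 by ring.
  rewrite E. split; lra.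
Qed.

Lemma fixed_point_tail_mass i : (i <= N)%nat ->
  INR i - 3 * sqrt (INR N) <= INR N * tail_mass (x i) <= INR i.
Proof.
  intros Hi. destruct (fixed_point_profile i Hi) as [P1 P2].
  assert (HN : 1 <= INR N) by (apply (le_INR 1); lia).
  assert (Hii : INR i <= INR N) by (apply le_INR; lia).
  assert (hsN := sqrt_lt_R0 (INR N) ltac:(lra)). assert (hsN2 := sqrt_sqrt (INR N) ltac:(lra)).
  assert (hA := sqrt_pos (INR N - INR i)). assert (hA2 := sqrt_sqrt (INR N - INR i) ltac:(lra)).
  assert (AsN : sqrt (INR N - INR i) <= sqrt (INR N))
    by (apply sqrt_le_1_alt; assert (h := pos_INR i); lra).
  assert (hsN1 : 1 <= sqrt (INR N)) by (rewrite <- sqrt_1; apply sqrt_le_1_alt; lra).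
  assert (v0 : 0 <= edge_dist (x i)) by nra.
  rewrite tail_mass_bulk by auto.
  replace (INR N * (1 - edge_dist (x i) ^ 2))
    with (INR N - (edge_dist (x i) * sqrt (INR N)) ^ 2)
    by (rewrite Rpow_mult_distr, pow2_sqrt by lra; ring).
  set (z := edge_dist (x i) * sqrt (INR N)) in *. set (A := sqrt (INR N - INR i)) in *.
  assert (A * A <= z * z <= (A + 1) * (A + 1)) by (split; apply Rmult_le_compat; lra).
  split; nra.
Qed.

Lemma fixed_point_count_error a b la rb : a <= b -> b <= 0 ->
  Rabs (count_in N x a b la rb - INR N * (tail_mass a - tail_mass b)) <= 4 * sqrt (INR N).
Proof.
  intros Hab Hb.
  assert (P := fixed_point_tail_mass).
  assert (HN : 1 <= INR N) by (apply (le_INR 1); lia).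
  assert (hsN1 : 1 <= sqrt (INR N)) by (rewrite <- sqrt_1; apply sqrt_le_1_alt; lra).
  assert (Ra := tail_mass_bounds a ltac:(lra)). assert (Rb := tail_mass_bounds b Hb).
  assert (Mab := tail_mass_antitone a b Hab).
  set (g := fun i => in_interval a b la rb (x i)).
  change (count_in N x a b la rb) with (count N g).
  assert (Up : count N g <=
      Rmax 0 (INR N * tail_mass a + 3 * sqrt (INR N) - INR N * tail_mass b + 1)).
  { apply count_le. intros i Hi G. apply in_interval_le in G. specialize (P i Hi).
    assert (h1 := tail_mass_antitone a (x i) ltac:(lra)).
    assert (h2 := tail_mass_antitone (x i) b ltac:(lra)).
    split; nra. }
  assert (Lo : Rmin (INR N * tail_mass a - 1) (INR N)
               - (INR N * tail_mass b + 3 * sqrt (INR N)) <= count N g).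
  { apply count_ge; [nra|]. intros i Hi [h1 h2]. apply in_interval_lt. specialize (P i Hi).
    split.
    - destruct (Rlt_dec a (x i)); auto. assert (h := tail_mass_antitone (x i) a ltac:(lra)). nra.
    - destruct (Rlt_dec (x i) b); auto. assert (h := tail_mass_antitone b (x i) ltac:(lra)). nra. }
  rewrite Rmax_right in Up by nra. rewrite Rmin_left in Lo by nra.
  apply Rabs_le. split; lra.
Qed.

End FixedPointProfile.

Section Family.
Variables (L : R) (xs : nat -> nat -> R).
Hypotheses (edge_in_box : 2 < sqrt c * L)
  (fps : forall N, (1 <= N)%nat -> is_fixed_point N L (c * INR N) (xs N)).

Lemma last_particle_cv : Un_cv (fun N => xs N N) (- (2 / sqrt c)).
Proof.
  assert (hc := sqrt_lt_R0 c c_pos).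
  apply Un_cv_inv_sqrt_rate with (M := 2 / sqrt c). intros N HN.
  assert (P := fixed_point_profile N L (xs N) HN edge_in_box (fps N HN) N (le_n _)).
  rewrite Rminus_diag, sqrt_0 in P.
  assert (hsN := sqrt_lt_R0 (INR N) ltac:(apply (lt_INR 0); lia)).
  assert (0 <= edge_dist (xs N N) <= / sqrt (INR N)).
  { split; [nra|]. apply Rmult_le_reg_r with (sqrt (INR N)); auto.
    rewrite Rinv_l by lra. lra. }
  replace (xs N N - - (2 / sqrt c)) with (2 / sqrt c * edge_dist (xs N N))
    by (unfold edge_dist; field; lra).
  rewrite Rabs_right by (apply Rle_ge, Rmult_le_pos; [left; apply Rdiv_lt_0_compat|]; lra).
  unfold Rdiv at 3. apply Rmult_le_compat_l; [left; apply Rdiv_lt_0_compat|]; lra.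
Qed.

Lemma count_in_cv a b la rb : a <= b -> b <= 0 ->
  Un_cv (fun N => count_in N (xs N) a b la rb / INR N) (tail_mass a - tail_mass b).
Proof.
  intros Hab Hb. apply Un_cv_inv_sqrt_rate with (M := 4). intros N HN.
  assert (E := fixed_point_count_error N L (xs N) HN edge_in_box (fps N HN) a b la rb Hab Hb).
  assert (HNp : 0 < INR N) by (apply (lt_INR 0); lia).
  assert (hs2 := sqrt_sqrt (INR N) ltac:(lra)). assert (hs := sqrt_lt_R0 (INR N) HNp).
  replace (count_in N (xs N) a b la rb / INR N - (tail_mass a - tail_mass b))
    with ((count_in N (xs N) a b la rb - INR N * (tail_mass a - tail_mass b)) / INR N)
    by (field; lra).
  rewrite Rabs_div, (Rabs_right (INR N)) by lra.
  apply Rmult_le_reg_r with (INR N); auto.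
  assert (E4 : 4 / sqrt (INR N) * INR N = 4 * sqrt (INR N)).
  { set (s := sqrt (INR N)) in *. rewrite <- hs2. field. lra. }
  rewrite E4. unfold Rdiv. rewrite Rmult_assoc, Rinv_l, Rmult_1_r by lra. auto.
Qed.

Lemma limit_density_is_density : is_density L xs limit_density.
Proof.
  intros a b Ha Hab Hb. destruct (RiemannInt_limit_density a b ltac:(lra)) as [pr Hpr].
  exists pr. intros la rb. rewrite Hpr. apply count_in_cv; lra.
Qed.

Lemma density_integral rho : is_density L xs rho ->
  forall a b, - L <= a -> a < b -> b <= 0 ->
  exists pr : Riemann_integrable rho a b, RiemannInt pr = tail_mass a - tail_mass b.
Proof.
  intros Hrho a b Ha Hab Hb. destruct (Hrho a b Ha Hab Hb) as [pr Hpr].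
  exists pr. apply (UL_sequence _ _ _ (Hpr true true)), count_in_cv; lra.
Qed.

Lemma density_not_constant_in_bulk rho : is_density L xs rho ->
  ~ (exists C, forall y, - (2 / sqrt c) < y < 0 -> rho y = C).
Proof.
  intros Hrho [C HC]. assert (hc := sqrt_lt_R0 c c_pos).
  (* In the variable u = edge_dist t the tail mass is 1 - u ^ 2, so a constant density would
     make the secant slope (u + v) of u ^ 2 independent of u and v. *)
  assert (slope : forall u v, 0 < u -> u < v -> v < 1 -> C * (2 / sqrt c) = u + v).
  { intros u v Hu Huv Hv.
    set (a := (u - 1) * 2 / sqrt c). set (b := (v - 1) * 2 / sqrt c).
    assert (Ea : edge_dist a = u) by (unfold a, edge_dist; field; lra).
    assert (Eb : edge_dist b = v) by (unfold b, edge_dist; field; lra).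
    assert (Hba : b - a = (v - u) * (2 / sqrt c)) by (unfold a, b; field; lra).
    assert (Ha : - (2 / sqrt c) < a) by (unfold a; apply Rmult_lt_reg_r with (sqrt c); auto;
      field_simplify; lra).
    assert (Hb : b < 0) by (unfold b; apply Rmult_lt_reg_r with (sqrt c); auto; field_simplify; lra).
    assert (HLa : - L < - (2 / sqrt c))
      by (apply Ropp_lt_contravar, Rmult_lt_reg_r with (sqrt c); auto; field_simplify; lra).
    assert (Hab : a < b) by (assert (0 < 2 / sqrt c) by (apply Rdiv_lt_0_compat; lra); nra).
    destruct (density_integral rho Hrho a b ltac:(lra) Hab ltac:(lra)) as [pr Hpr].
    rewrite (RiemannInt_const_on _ C) in Hpr by (lra || (intros y Hy; apply HC; lra)).
    rewrite !tail_mass_bulk, Ea, Eb, Hba in Hpr by lra.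
    apply Rmult_eq_reg_l with (v - u); [|lra]. lra. }
  assert (h1 := slope (1 / 4) (1 / 2) ltac:(lra) ltac:(lra) ltac:(lra)).
  assert (h2 := slope (1 / 2) (3 / 4) ltac:(lra) ltac:(lra) ltac:(lra)).
  lra.
Qed.

End Family.
End Profile.

Lemma supercritical_edge_inside c L : 0 < L -> c > 4 / L ^ 2 -> 0 < c /\ 2 < sqrt c * L.
Proof.
  intros HL Hc. assert (HL2 : 0 < L ^ 2) by (apply pow_lt; auto).
  assert (H4 : 4 < c * L ^ 2).
  { apply Rmult_lt_compat_r with (r := L ^ 2) in Hc; auto.
    unfold Rdiv in Hc. rewrite Rmult_assoc, Rinv_l, Rmult_1_r in Hc by lra. lra. }
  assert (c_pos : 0 < c) by nra. split; auto.
  rewrite <- (sqrt_pow2 L), <- sqrt_mult by lra.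
  rewrite <- (sqrt_pow2 2) by lra. apply sqrt_lt_1_alt. lra.
Qed.

Theorem theorem2 (L c : R) (xs : nat -> nat -> R) :
  0 < L ->
  c > 4 / L ^ 2 ->
  (forall N : nat, (1 <= N)%nat -> is_fixed_point N L (c * INR N) (xs N)) ->
  (exists N0 : nat, forall N : nat, (N0 <= N)%nat -> xs N N > -L) /\
  Un_cv (fun N => xs N N) (- (2 / sqrt c)) /\
  (exists rho : R -> R,
     is_density L xs rho /\
     (forall y : R, -L <= y < - (2 / sqrt c) -> rho y = 0)) /\
  (forall rho : R -> R, is_density L xs rho ->
     ~ (exists C : R, forall y : R, - (2 / sqrt c) < y < 0 -> rho y = C)).
Proof.
  intros HL Hc fps. destruct (supercritical_edge_inside c L HL Hc) as [c_pos edge_in_box].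
  split; [|split; [|split]].
  - exists 1%nat. intros N HN.
    destruct (fixed_point_cN_free c c_pos N L (xs N) HN edge_in_box (fps N HN)). lra.
  - exact (last_particle_cv c c_pos L xs edge_in_box fps).
  - exists (limit_density c). split.
    + exact (limit_density_is_density c c_pos L xs edge_in_box fps).
    + intros y [_ Hy]. unfold limit_density. rewrite Rmax_left; [ring|].
      rewrite <- (edge_dist_zero c c_pos). apply edge_dist_le; auto; lra.
  - exact (density_not_constant_in_bulk c c_pos L xs edge_in_box fps).
Qed.
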